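(* Let $R$ be a ring, let $A$ be an index set with $|A|>\max(2^{|R|},2^{\aleph_0})$, and let $(M_\alpha)_{\alpha\in A}$ be a family of left $R$-modules none of which is algebraically compact. Then $$\prod_{\alpha\in A}M_\alpha\Big/\bigoplus_{\alpha\in A}M_\alpha$$ is not algebraically compact.
   Context: A left $R$-module $M$ is algebraically compact if every system of linear equations $\sum_{j\in J} r_{ij}x_j=m_i$ ($i\in I$, $r_{ij}\in R$, each row having almost all $r_{ij}=0$, $m_i\in M$, $I,J$ arbitrary sets) whose finite subsystems are all solvable in $M$ is itself solvable in $M$ (equivalently, $M$ is pure injective). *)

From HB Require Import structures.
From mathcomp Require Import all_boot all_order all_algebra.
From mathcomp Require Import boolp classical_sets cardinality fsbigop.
Set Implicit Arguments. Unset Strict Implicit. Unset Printing Implicit Defensive.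
Import GRing.Theory.
Local Open Scope ring_scope.
Local Open Scope classical_set_scope.

Definition choiced (J : Type) : Type := J.
HB.instance Definition _ (J : Type) := gen_eqMixin (choiced J).
HB.instance Definition _ (J : Type) := gen_choiceMixin (choiced J).

Section LinearSystems.
Variables (R : pzRingType) (V : lmodType R).

Definition rows_finite (I J : Type) (r : I -> J -> R) : Prop :=
  forall i, finite_set [set j | r i j != 0].

Definition row_value (J : Type) (ri : J -> R) (x : J -> V) : V :=
  \sum_(j \in [set: choiced J]) (ri j *: x j).

Definition alg_compact : Prop :=
  forall (I J : Type) (r : I -> J -> R) (m : I -> V),
    rows_finite r ->
    (forall F : set I, finite_set F ->
       exists x : J -> V, forall i, F i -> row_value (r i) x = m i) ->
    exists x : J -> V, forall i, row_value (r i) x = m i.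

(* Elements of V/P are written as classes of elements of V, and an
   equation  sum_j r_ij [x_j] = [m_i]  holds in V/P iff
   sum_j r_ij x_j - m_i lies in P. *)
Definition alg_compact_quot (P : set V) : Prop :=
  forall (I J : Type) (r : I -> J -> R) (m : I -> V),
    rows_finite r ->
    (forall F : set I, finite_set F ->
       exists x : J -> V, forall i, F i -> P (row_value (r i) x - m i)) ->
    exists x : J -> V, forall i, P (row_value (r i) x - m i).

End LinearSystems.

Section Product.
Variables (R : pzRingType) (A : Type) (M : A -> lmodType R).

Definition dprod := forall a, M a.

HB.instance Definition _ := Choice.copy dprod (forall a, M a).

Definition dprod_zero : dprod := fun a => 0.
Definition dprod_add (x y : dprod) : dprod := fun a => x a + y a.
Definition dprod_opp (x : dprod) : dprod := fun a => - x a.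
Definition dprod_scale (k : R) (x : dprod) : dprod := fun a => k *: x a.

Lemma dprod_addA : associative dprod_add.
Proof. by move=> x y z; apply: functional_extensionality_dep => a; rewrite /dprod_add addrA. Qed.
Lemma dprod_addC : commutative dprod_add.
Proof. by move=> x y; apply: functional_extensionality_dep => a; rewrite /dprod_add addrC. Qed.
Lemma dprod_add0 : left_id dprod_zero dprod_add.
Proof. by move=> x; apply: functional_extensionality_dep => a; rewrite /dprod_add add0r. Qed.
Lemma dprod_addN : left_inverse dprod_zero dprod_opp dprod_add.
Proof. by move=> x; apply: functional_extensionality_dep => a; rewrite /dprod_add /dprod_opp addNr. Qed.

HB.instance Definition _ :=
  GRing.isZmodule.Build dprod dprod_addA dprod_addC dprod_add0 dprod_addN.

Lemma dprod_scaleA k l (x : dprod) :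
  dprod_scale k (dprod_scale l x) = dprod_scale (k * l) x.
Proof. by apply: functional_extensionality_dep => a; rewrite /dprod_scale scalerA. Qed.
Lemma dprod_scale1 : left_id 1 dprod_scale.
Proof. by move=> x; apply: functional_extensionality_dep => a; rewrite /dprod_scale scale1r. Qed.
Lemma dprod_scaleDr : right_distributive dprod_scale +%R.
Proof. by move=> k x y; apply: functional_extensionality_dep => a; rewrite /dprod_scale scalerDr. Qed.
Lemma dprod_scaleDl (x : dprod) :
  {morph dprod_scale^~ x : k l / k + l}.
Proof. by move=> k l; apply: functional_extensionality_dep => a; rewrite /dprod_scale scalerDl. Qed.

HB.instance Definition _ :=
  GRing.Zmodule_isLmodule.Build R dprod dprod_scaleA dprod_scale1
    dprod_scaleDr dprod_scaleDl.

Definition dsum : set dprod :=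
  [set x | finite_set [set a | x a != 0]].

End Product.

Definition card_lt (T U : Type) (X : set T) (Y : set U) : Prop :=
  (X #<= Y)%card /\ ~ (Y #<= X)%card.

From HB Require Import structures.
From mathcomp Require Import all_boot all_order all_algebra.
From mathcomp Require Import boolp classical_sets cardinality fsbigop functions finmap.
Set Implicit Arguments. Unset Strict Implicit. Unset Printing Implicit Defensive.
Import GRing.Theory.
Local Open Scope classical_set_scope.

(* If M_a is not algebraically compact, a maximal partial solution of a finitely
   solvable but unsolvable system leaves one unknown stuck; the systems it lies
   in give a family S_a of one-unknown systems over R with constants in M_a that
   is finitely satisfiable but not satisfiable.  For a fixed family S, stacking in
   every coordinate a with S_a = S the systems of S yields a system over the
   product that is finitely solvable, while every solution modulo the direct sum
   fails, at each such a, in one row, and only at finitely many coordinates per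
   row.  So a |-> (S_a, failing row, index of a among the failures of that row)
   is injective and |A| <= 2^(|R| + aleph_0), because finite sequences over an
   infinite T are no more numerous than T (Hessenberg: |T * T| = |T|). *)

Definition extends (J V : Type) (p q : set J * (J -> V)) : Prop :=
  p.1 `<=` q.1 /\ forall j, p.1 j -> p.2 j = q.2 j.

Lemma extends_refl J V (p : set J * (J -> V)) : extends p p.
Proof. by split. Qed.

Lemma extends_trans J V (p q s : set J * (J -> V)) :
  extends p q -> extends q s -> extends p s.
Proof.
move=> [pq epq] [qs eqs]; split=> [j /pq /qs //|j pj].
by rewrite epq // eqs //; apply: pq.
Qed.

Lemma chain_glue J V (v0 : V) (C : set (set J * (J -> V))) :
  total_on C (@extends J V) ->
  exists g : J -> V, forall p j, C p -> p.1 j -> g j = p.2 j.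
Proof.
move=> Ctot.
exists (fun j => xget (v0 : choiced V) [set v | exists2 p, C p & p.1 j /\ v = p.2 j]).
move=> p j Cp pj; case: xgetP => [v _ [q Cq [qj ->]]|/(_ (p.2 j))[]]; last by exists p.
by case: (Ctot _ _ Cp Cq) => -[_ eq]; rewrite eq.
Qed.

Lemma chain_finite_sub J V (C : set (set J * (J -> V))) (W : set J) :
  C !=set0 -> total_on C (@extends J V) -> finite_set W ->
  W `<=` \bigcup_(p in C) p.1 -> exists2 p, C p & W `<=` p.1.
Proof.
move=> [p0 Cp0] Ctot /(@finite_seqP (choiced J))[s ->] {W}.
elim: s => [|j s IHs] sC; first by exists p0.
have [q Cq qj] := sC j (mem_head _ _).
have [|p Cp ps] := IHs; first by move=> j' js; apply: sC; rewrite /= inE js orbT.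
case: (Ctot _ _ Cp Cq) => -[sub _]; [exists q|exists p] => // j';
  rewrite /= inE => /orP[/eqP->|/ps]; by [apply: sub|].
Qed.

Lemma zorn_premaximal T (P : set T) (le : T -> T -> Prop) (t0 : T) : P t0 ->
  (forall t, le t t) -> (forall r s t, le r s -> le s t -> le r t) ->
  (forall C, C !=set0 -> C `<=` P -> total_on C le ->
     exists2 q, P q & forall p, C p -> le p q) ->
  exists2 t, P t & forall s, P s -> le t s -> le s t.
Proof.
move=> Pt0 le_refl le_trans chain_ub.
pose leP (p q : {t | P t}) := `[< le (sval p) (sval q) >].
have [[t Pt] tmax] : exists t, premaximal leP t.
  apply: (ZL_preorder (exist _ t0 Pt0)).
  - by move=> t; apply/asboolP.
  - by move=> r s t /asboolP rs /asboolP st; apply/asboolP; apply: le_trans rs st.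
  move=> C Ctot; have [[p0 Cp0]|C0] := pselect (C !=set0); last first.
    by exists (exist _ t0 Pt0) => p Cp; case: C0; exists p.
  have [||| q Pq qmax] := chain_ub (sval @` C).
  - by exists (sval p0), p0.
  - by move=> _ [[p ?] _ <-].
  - by move=> _ _ [p Cp <-] [q Cq <-]; have [] := Ctot _ _ Cp Cq => /asboolP; [left|right].
  by exists (exist _ q Pq) => p Cp; apply/asboolP; apply: qmax; exists p.
by exists t => // s Ps ts; apply/asboolP/(tmax (exist _ s Ps))/asboolP.
Qed.

Lemma total_on_subset2 T (F : set (set T)) (G1 G2 : set T) :
  total_on F subset -> F G1 -> F G2 -> exists2 H, F H & G1 `<=` H /\ G2 `<=` H.
Proof.
move=> Ftot F1 F2; case: (Ftot _ _ F1 F2) => s.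
  by exists G2 => //; split.
by exists G1 => //; split.
Qed.

Section Matching.
Variables (T U : Type) (u0 : U) (X : set T) (Z : set U) (G : set (T * U)).
Hypothesis GXZ : G `<=` X `*` Z.
Hypothesis G_inj : forall a a' b, G (a, b) -> G (a', b) -> a = a'.

Lemma matching_inj : (forall x, X x -> exists z, G (x, z)) ->
  exists2 f : T -> U, set_fun X Z f & set_inj X f.
Proof.
move=> Gtot; pose f x := xget (u0 : choiced U) [set z | G (x, z)].
have Gf x : X x -> G (x, f x) by move=> /Gtot[z]; exact: (@xgetI (choiced U) u0 [set z | G (x, z)]).
exists f => [x /Gf/GXZ[] //|x y /set_mem Xx /set_mem Xy fxy].
by apply: (G_inj (Gf _ Xx)); rewrite fxy; apply: Gf.
Qed.

End Matching.

Lemma inj_or_inj T U (t0 : T) (u0 : U) (X : set T) (Z : set U) :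
  (exists2 f : T -> U, set_fun X Z f & set_inj X f) \/
  (exists2 g : U -> T, set_fun Z X g & set_inj Z g).
Proof.
pose matching (G : set (T * U)) := [/\ G `<=` X `*` Z,
  forall a b b', G (a, b) -> G (a, b') -> b = b' &
  forall a a' b, G (a, b) -> G (a', b) -> a = a'].
have [G [[GXZ G_fun G_inj] Gmax]] :
    exists G, matching G /\ forall G', G `<` G' -> ~ matching G'.
  apply: Zorn_bigcup => F Fm Ftot; split.
  - by move=> p [G FG Gp]; have [GXZ _ _] := Fm _ FG; apply: GXZ.
  - move=> a b b' [G1 F1 G1ab] [G2 F2 G2ab'].
    have [H FH [sH1 sH2]] := total_on_subset2 Ftot F1 F2.
    by have [_ H_fun _] := Fm _ FH; apply: H_fun (sH1 _ G1ab) (sH2 _ G2ab').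
  - move=> a a' b [G1 F1 G1ab] [G2 F2 G2a'b].
    have [H FH [sH1 sH2]] := total_on_subset2 Ftot F1 F2.
    by have [_ _ H_inj] := Fm _ FH; apply: H_inj (sH1 _ G1ab) (sH2 _ G2a'b).
have [XG|/existsNP[x /not_implyP[Xx xG]]] := pselect (forall x, X x -> exists z, G (x, z)).
  by left; apply: matching_inj GXZ G_inj XG.
have [ZG|/existsNP[z /not_implyP[Zz zG]]] := pselect (forall z, Z z -> exists x, G (x, z)).
  right; apply: (@matching_inj _ _ t0 _ _ [set p | G (p.2, p.1)]).
  - by move=> [b a] /GXZ[].
  - by move=> b b' a; apply: G_fun.
  - by move=> b /ZG[a Gab]; exists a.
exfalso; apply: (Gmax (G `|` [set (x, z)])).
  split=> [p Gp|/(_ (x, z) (or_intror erefl)) Gxz]; [by left|by apply: xG; exists z].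
split.
- by move=> p [/GXZ //|->].
- move=> a b b' [Gab|[ea eb]] [Gab'|[ea' eb']]; subst.
  + exact: G_fun Gab Gab'.
  + by case: xG; exists b.
  + by case: xG; exists b'.
  + by [].
- move=> a a' b [Gab|[ea eb]] [Ga'b|[ea' eb']]; subst.
  + exact: G_inj Gab Ga'b.
  + by case: zG; exists a.
  + by case: zG; exists a'.
  + by [].
Qed.

Section SquareInjection.
Variables (T : Type) (e : nat -> T).
Hypothesis e_inj : injective e.

Definition sqr_inj (X : set T) (f : T * T -> T) :=
  [/\ range e `<=` X, set_fun (X `*` X) X f & set_inj (X `*` X) f].

Lemma set_inj_pair_map (X Y : set T) (f : T * T -> T) (i : T -> T) :
  set_fun (X `*` X) X f -> set_inj (X `*` X) f -> set_fun Y X i -> set_inj Y i ->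
  set_fun (Y `*` Y) X (fun p => f (i p.1, i p.2)) /\
  set_inj (Y `*` Y) (fun p => f (i p.1, i p.2)).
Proof.
move=> fX f_inj iX i_inj; split=> [p [Yp1 Yp2]|]; first by apply: fX; split; apply: iX.
move=> [a b] [a' b'] /set_mem[/= Ya Yb] /set_mem[/= Ya' Yb'].
have XX c d : Y c -> Y d -> (i c, i d) \in X `*` X.
  by move=> Yc Yd; apply: mem_set; split; apply: iX.
move=> /(f_inj _ _ (XX _ _ Ya Yb) (XX _ _ Ya' Yb')) [].
by move=> /(i_inj _ _ (mem_set Ya) (mem_set Ya'))-> /(i_inj _ _ (mem_set Yb) (mem_set Yb'))->.
Qed.

(* The tags e 0 and e 1 keep the copies of X and of Y `\` X apart. *)
Definition sqr_merge (X : set T) (f : T * T -> T) (u : T -> T) (a : T) : T :=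
  f (if `[< X a >] then (e 0, a) else (e 1, u a)).

Lemma sqr_merge_inj X f (Y : set T) u : sqr_inj X f ->
  set_fun (Y `\` X) X u -> set_inj (Y `\` X) u ->
  set_fun Y X (sqr_merge X f u) /\ set_inj Y (sqr_merge X f u).
Proof.
move=> [eX fX f_inj] uX u_inj.
pose tagged a := if `[< X a >] then (e 0, a) else (e 1, u a).
have tagged_in a : Y a -> (X `*` X) (tagged a).
  rewrite /tagged; have [Xa|Xa] := pselect (X a).
    by rewrite asboolT //; split=> //; apply: eX; exists 0%N.
  by rewrite asboolF // => Ya; split; [apply: eX; exists 1%N|apply: uX].
split=> [a /tagged_in /fX //|a a' /set_mem Ya /set_mem Ya'].
move=> /(f_inj _ _ (mem_set (tagged_in _ Ya)) (mem_set (tagged_in _ Ya'))).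
rewrite /tagged; have [Xa|Xa] := pselect (X a); have [Xa'|Xa'] := pselect (X a');
  rewrite ?(asboolT Xa) ?(asboolF Xa) ?(asboolT Xa') ?(asboolF Xa').
- by case.
- by case=> /e_inj.
- by case=> /e_inj.
by case=> /u_inj; apply; apply: mem_set.
Qed.

(* The pairs of Y = X `|` k @` X outside X `*` X are sent injectively into k @` X,
   which is disjoint from X. *)
Lemma sqr_inj_extend X f (k : T -> T) : sqr_inj X f ->
  set_fun X (~` X) k -> set_inj X k ->
  exists Y g, [/\ sqr_inj Y g, extends (X `*` X, f) (Y `*` Y, g) & ~ Y `<=` X].
Proof.
move=> Xf kX k_inj; have [eX fX f_inj] := Xf.
pose Y := X `|` k @` X.
have XY : X `<=` Y by move=> x; left.
have kY a : X a -> Y (k a) by move=> Xa; right; exists a.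
pose kinv y := xget (e 0 : choiced T) [set a | X a /\ k a = y].
have kinvP y : (Y `\` X) y -> X (kinv y) /\ k (kinv y) = y.
  by move=> [[//|[a Xa <-]] _]; exact: (@xgetI (choiced T) _ [set b | X b /\ k b = k a] a).
have [iY i_inj] : set_fun Y X (sqr_merge X f kinv) /\ set_inj Y (sqr_merge X f kinv).
  apply: sqr_merge_inj => // [y /kinvP[] //|y y' /set_mem/kinvP[_ ky] /set_mem/kinvP[_ ky']].
  by move=> eq; rewrite -ky -ky' eq.
pose s p := f (sqr_merge X f kinv p.1, sqr_merge X f kinv p.2).
have [sX s_inj] := set_inj_pair_map fX f_inj iY i_inj.
pose g p := if `[< (X `*` X) p >] then f p else k (s p).
exists Y, g; split.
- split=> [x /eX /XY //|p [Yp1 Yp2]|p q /set_mem Yp /set_mem Yq].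
  + rewrite /g; have [XXp|XXp] := pselect ((X `*` X) p).
      by rewrite asboolT //; apply/XY/fX.
    by rewrite asboolF //; apply/kY/sX.
  + rewrite /g; have [XXp|XXp] := pselect ((X `*` X) p);
      have [XXq|XXq] := pselect ((X `*` X) q);
      rewrite ?(asboolT XXp) ?(asboolF XXp) ?(asboolT XXq) ?(asboolF XXq).
    * by apply: f_inj; apply: mem_set.
    * by move=> fks; case: (kX _ (sX _ Yq)); rewrite -fks; apply: fX.
    * by move=> kfs; case: (kX _ (sX _ Yp)); rewrite kfs; apply: fX.
    * move=> /(k_inj _ _ (mem_set (sX _ Yp)) (mem_set (sX _ Yq))).
      exact: (s_inj _ _ (mem_set Yp) (mem_set Yq)).
- split=> [p [Xp1 Xp2]|p XXp]; first by split; apply: XY.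
  by rewrite /= /g asboolT.
- have X0 : X (e 0) by apply: eX; exists 0%N.
  by move=> /(_ (k (e 0)) (kY _ X0)); apply: kX.
Qed.

Definition sqr_graph (p : set T * (T * T -> T)) := (p.1 `*` p.1, p.2).

Lemma sqr_inj_chain (C : set (set T * (T * T -> T))) : C !=set0 ->
  (forall p, C p -> sqr_inj p.1 p.2) ->
  total_on C (fun p q => extends (sqr_graph p) (sqr_graph q)) ->
  exists2 q, sqr_inj q.1 q.2 & forall p, C p -> extends (sqr_graph p) (sqr_graph q).
Proof.
move=> [p0 Cp0] CP Ctot.
have [F FE] : exists F : T * T -> T,
    forall r x, C r -> (r.1 `*` r.1) x -> F x = r.2 x.
  have [|F FE] := @chain_glue _ _ (e 0) (sqr_graph @` C).
    by move=> _ _ [p Cp <-] [q Cq <-]; apply: Ctot.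
  by exists F => r x Cr; apply: (FE (sqr_graph r)); exists r.
have common p1 p2 : C p1 -> C p2 -> exists2 r, C r & p1.1 `<=` r.1 /\ p2.1 `<=` r.1.
  have sub r s : extends (sqr_graph r) (sqr_graph s) -> r.1 `<=` s.1.
    by move=> [rs _] a ra; have [] := rs (a, a).
  move=> C1 C2; case: (Ctot _ _ C1 C2) => /sub sub12.
    by exists p2 => //; split.
  by exists p1 => //; split.
pose U := \bigcup_(p in C) p.1.
have U2 a b : U a -> U b -> exists2 r, C r & r.1 a /\ r.1 b.
  move=> [p Cp pa] [q Cq qb]; have [r Cr [pr qr]] := common p q Cp Cq.
  by exists r => //; split; [apply: pr|apply: qr].
exists (U, F) => [|p Cp]; last first.
  by split=> [[a b] [pa pb]|x px]; [split; exists p|rewrite /= (FE p)].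
split=> [x ex|[a b] [/= Ua Ub]|[a b] [a' b'] /set_mem[/= Ua Ub] /set_mem[/= Ua' Ub']].
- by exists p0 => //; have [eX _ _] := CP _ Cp0; apply: eX.
- have [r Cr [ra rb]] := U2 a b Ua Ub; have [_ rX _] := CP _ Cr.
  by rewrite (FE r) //; exists r => //; apply: rX.
- have [r Cr [ra rb]] := U2 _ _ Ua Ub; have [r' Cr' [ra' rb']] := U2 _ _ Ua' Ub'.
  have [s Cs [rs r's]] := common _ _ Cr Cr'; have [_ _ s_inj] := CP _ Cs.
  have s2 c d : r.1 c -> r.1 d -> (s.1 `*` s.1) (c, d) by split; apply: rs.
  have s2' c d : r'.1 c -> r'.1 d -> (s.1 `*` s.1) (c, d) by split; apply: r's.
  rewrite (FE s _ Cs (s2 _ _ ra rb)) (FE s _ Cs (s2' _ _ ra' rb')).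
  exact: (s_inj _ _ (mem_set (s2 _ _ ra rb)) (mem_set (s2' _ _ ra' rb'))).
Qed.

Let einv (a : T) : nat := xget 0%N [set n | e n = a].

Let einvK n : einv (e n) = n.
Proof. by apply: xget_unique => // m /e_inj. Qed.

Lemma sqr_inj_range : sqr_inj (range e) (fun p => e (choice.pickle (einv p.1, einv p.2))).
Proof.
split=> [//|p [[i _ <-] [j _ <-]]|]; first by eexists.
move=> [a b] [a' b'] /set_mem[[i _ /= <-] [j _ <-]] /set_mem[[i' _ /= <-] [j' _ <-]] /=.
by rewrite !einvK => /e_inj/(pcan_inj choice.pickleK)[-> ->].
Qed.

Lemma sqr_inj_max : exists X f, sqr_inj X f /\
  forall Y g, sqr_inj Y g -> extends (sqr_graph (X, f)) (sqr_graph (Y, g)) -> Y `<=` X.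
Proof.
have [[X f] Xf Xmax] := @zorn_premaximal _ [set p | sqr_inj p.1 p.2]
  (fun p q => extends (sqr_graph p) (sqr_graph q)) (_, _) sqr_inj_range
  (fun p => extends_refl _) (fun p q s => @extends_trans _ _ _ _ _) sqr_inj_chain.
exists X, f; split=> // Y g Yg /(Xmax (Y, g) Yg)[sub _] a Ya.
by have [] := sub (a, a).
Qed.

(* A maximal X cannot be embedded in its complement, so the complement embeds
   in X, and then T embeds in X. *)
Lemma infinite_sqr_inj : exists h : T * T -> T, injective h.
Proof.
have [X [f [Xf Xmax]]] := sqr_inj_max; have [_ fX f_inj] := Xf.
have [[k kX k_inj]|[u uX u_inj]] := inj_or_inj (e 0) (e 0) X (~` X).
  have [Y [g [Yg ext YX]]] := sqr_inj_extend Xf kX k_inj.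
  by case: (YX (Xmax _ _ Yg ext)).
have [iX i_inj] : set_fun setT X (sqr_merge X f u) /\ set_inj setT (sqr_merge X f u).
  by apply: sqr_merge_inj; rewrite // setTD.
have [_ h_inj] := set_inj_pair_map fX f_inj iX i_inj.
have TT p : p \in [set: T] `*` [set: T] by apply: mem_set.
by eexists => p q; apply: h_inj (TT p) (TT q).
Qed.

End SquareInjection.

Lemma infinite_seq_inj T : ([set: nat] #<= [set: T])%card ->
  exists enc : seq T -> T, injective enc.
Proof.
move=> /card_leP[i].
pose e n := val (i (SigSub (@mem_set _ [set: nat] n I))).
have e_inj : injective e.
  by move=> m n /val_inj/(@inj _ _ _ i _ _ (mem_set I) (mem_set I))/(congr1 val).
have [h h_inj] := infinite_sqr_inj e_inj.
exists (fun s => h (e (size s), foldr (fun x acc => h (x, acc)) (e 0) s)).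
move=> s s' /h_inj[/e_inj]; elim: s s' => [|x s IHs] [|y s'] //= [size_eq] /h_inj[-> eq].
by rewrite (IHs _ size_eq eq).
Qed.

Definition set_code (X Y T : Type) (f : X -> T) (g : Y -> T) (enc : seq T -> T)
  (p : set X * Y) : set T := [set enc [:: f x] | x in p.1] `|` [set enc [:: g p.2; g p.2]].

Lemma set_code_inj (X Y T : Type) (f : X -> T) (g : Y -> T) (enc : seq T -> T) :
  injective f -> injective g -> injective enc -> injective (set_code f g enc).
Proof.
move=> f_inj g_inj enc_inj [P y] [P' y'] eq.
have inP Q z x : set_code f g enc (Q, z) (enc [:: f x]) <-> Q x.
  split=> [[[x' Qx' /enc_inj[/f_inj <-]]|/enc_inj] //|Qx]; by left; exists x.
congr pair.
  apply/seteqP; split=> x Px.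
    by apply/(inP _ y'); rewrite -eq; apply/inP.
  by apply/(inP _ y); rewrite eq; apply/inP.
have : set_code f g enc (P', y') (enc [:: g y; g y]) by rewrite -eq; right.
by case=> [[x _ /enc_inj]|/enc_inj[/g_inj]].
Qed.

Lemma finite_cover_inj (A Y : Type) (E : Y -> set A) :
  (forall y, finite_set (E y)) -> (forall a, exists y, E y a) ->
  exists f : A -> Y * nat, injective f.
Proof.
move=> E_fin E_cover; have [idx idxE] := choice E_cover.
have [num num_inj] := choice (fun y => countable_injP _ (finite_set_countable (E_fin y))).
exists (fun a => (idx a, num (idx a) a)) => a b [eidx]; rewrite -eidx.
apply: num_inj; apply: mem_set; [exact: idxE|rewrite eidx; exact: idxE].
Qed.

Lemma card_le_inj T U (f : T -> U) : injective f -> ([set: T] #<= [set: U])%card.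
Proof.
move=> f_inj; have [] : $|{injfun [set: T] >-> [set: U]}|.
  by apply/injfunPex; exists f => // x y _ _; apply: f_inj.
exact: inj_card_le.
Qed.

Lemma card_le_set_seq_seq (X T : Type) (iX : X -> T) : injective iX ->
  ([set: nat] #<= [set: T])%card ->
  ([set: set (seq (seq X)) * ((seq (seq X) * nat) * nat)] #<= [set: set T])%card.
Proof.
move=> iX_inj /infinite_seq_inj[enc enc_inj].
pose encP (phi : seq (seq X)) := enc (map (fun l => enc (map iX l)) phi).
have encP_inj : injective encP.
  by apply: inj_comp (inj_map _) => // l l' /enc_inj/inj_map; apply.
pose encN n := enc (nseq n (enc [::])).
have encN_inj : injective encN by move=> n n' /enc_inj/(congr1 size); rewrite !size_nseq.
pose encY (y : (seq (seq X) * nat) * nat) := enc [:: encP y.1.1; encN y.1.2; encN y.2].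
have encY_inj : injective encY.
  by move=> [[phi k] n] [[phi' k'] n'] /enc_inj[/encP_inj-> /encN_inj-> /encN_inj->].
exact: card_le_inj (set_code_inj encP_inj encY_inj enc_inj).
Qed.

Local Open Scope ring_scope.

Definition linsys (R : pzRingType) := seq (seq R).

Section LinearSystemsInOneVariable.
Variables (R : pzRingType) (V : lmodType R).

Definition lin_eval (l : seq R) (z : nat -> V) : V := \sum_(j < size l) l`_j *: z j.

(* Row k of phi reads [sum_l phi_k`_l z_l = c k] with z_0 = v; the rows past
   size phi are empty, so they force c k = 0. *)
Definition sat_at (v : V) (phi : linsys R) (c : nat -> V) :=
  exists2 z : nat -> V, z 0%N = v & forall k, lin_eval (nth [::] phi k) z = c k.

Definition satisfiable (S : set (linsys R)) (c : linsys R -> nat -> V) :=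
  exists v, forall phi, S phi -> sat_at v phi (c phi).

Definition fin_satisfiable (S : set (linsys R)) (c : linsys R -> nat -> V) :=
  forall Psi, finite_set Psi -> Psi `<=` S -> satisfiable Psi c.

Lemma lin_evalDB l (z1 z2 z3 : nat -> V) :
  lin_eval l (fun j => z1 j - z2 j + z3 j) = lin_eval l z1 - lin_eval l z2 + lin_eval l z3.
Proof.
rewrite /lin_eval -sumrB -big_split /=; apply: eq_bigr => j _.
by rewrite scalerDr scalerBr.
Qed.

Lemma sat_at_coset v u phi c c' :
  sat_at v phi c' -> sat_at u phi c' -> sat_at u phi c -> sat_at v phi c.
Proof.
move=> [z1 z10 h1] [z2 z20 h2] [z3 z30 h3].
exists (fun j => z1 j - z2 j + z3 j); first by rewrite z10 z20 z30 subrK.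
by move=> k; rewrite lin_evalDB h1 h2 h3 subrr add0r.
Qed.

Lemma lin_eval_map (J : Type) (j0 : J) (js : seq J) (ri : J -> R) (x : J -> V)
    (z : nat -> V) :
  (forall l, (l < size js)%N -> z l = x (nth j0 js l)) ->
  lin_eval (map ri js) z = \sum_(j <- js) ri j *: x j.
Proof.
move=> zx; rewrite /lin_eval size_map (big_nth j0) big_mkord; apply: eq_bigr => l _.
by rewrite (nth_map j0) // zx.
Qed.

End LinearSystemsInOneVariable.

Section RowValue.
Variables (R : pzRingType) (V : lmodType R) (J : Type).

Lemma row_value_seq (ri : J -> R) (x : J -> V) (s : seq (choiced J)) :
  uniq s -> (forall j, j \notin s -> ri j = 0) ->
  row_value ri x = \sum_(j <- s) ri j *: x j.
Proof.
move=> s_uniq s_supp; rewrite /row_value (fsbigE s) //.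
  by apply: eq_bigl => j; rewrite in_setT.
by move=> j _ /s_supp ->; rewrite scale0r.
Qed.

Lemma eq_row_value (ri : J -> R) (x x' : J -> V) :
  (forall j, ri j != 0 -> x j = x' j) -> row_value ri x = row_value ri x'.
Proof.
move=> xx'; rewrite /row_value; apply: eq_fsbigr => j _.
by have [->|/xx' ->] := eqVneq (ri j) 0; rewrite ?scale0r.
Qed.

Lemma row_value_split (ri : J -> R) (x g : J -> V) (D : set (choiced J))
    (js : seq (choiced J)) :
  finite_set [set j : choiced J | ri j != 0] ->
  (forall j, D j -> x j = g j) -> uniq js -> [set` js] `<=` ~` D ->
  (forall j, ri j != 0 -> ~ D j -> j \in js) ->
  row_value ri x = \sum_(j \in D) ri j *: g j + \sum_(j <- js) ri j *: x j.
Proof.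
move=> supp_fin xg js_uniq jsD js_supp.
set supp := [set j : choiced J | ri j != 0].
have zero_off (y : J -> V) (A : set (choiced J)) :
    A `\` supp `<=` (fun j => ri j *: y j) @^-1` [set 0].
  by move=> j [_ /negP/negPn/eqP rj0]; rewrite /preimage /= rj0 scale0r.
rewrite /row_value -(fsbig_widen supp) // (fsbigID D) //; congr (_ + _).
  rewrite (fsbig_widen (supp `&` D) D) //; last first.
    by move=> j [Dj] /not_andP[nsupp|//]; apply: (zero_off _ D); split.
  by apply: eq_fsbigr => j /set_mem/xg->.
apply: fsbig_fwiden => // [j [suppj nDj]|j [jsj]]; first exact: js_supp.
move=> /not_andP[nsupp|/contrapT nDj]; last by case: (jsD _ jsj).
exact: (zero_off x [set` js] j (conj jsj nsupp)).
Qed.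

End RowValue.

Section OneVariableReduction.
Variables (R : pzRingType) (V : lmodType R) (I J : Type).
Variables (r : I -> J -> R) (m : I -> V).
Hypothesis r_fin : rows_finite r.

Definition solves_on (x : J -> V) (F : set I) := forall i, F i -> row_value (r i) x = m i.

Definition agrees (x : J -> V) (p : set J * (J -> V)) := forall j, p.1 j -> x j = p.2 j.

Definition extendable (p : set J * (J -> V)) :=
  forall F, finite_set F -> exists2 x, agrees x p & solves_on x F.

Lemma extendable_chain (C : set (set J * (J -> V))) : C !=set0 ->
  C `<=` extendable -> total_on C (@extends J V) ->
  exists2 q, extendable q & forall p, C p -> extends p q.
Proof.
move=> C0 Cext Ctot; have [g gE] := chain_glue 0 Ctot.
pose D := \bigcup_(p in C) p.1.
exists (D, g) => [F Ffin|p Cp]; last by split=> [j pj|j pj]; [exists p|rewrite /= (gE p)].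
pose W := D `&` \bigcup_(i in F) [set j | r i j != 0].
have [||p Cp Wp] := chain_finite_sub C0 Ctot (W := W).
- by apply: finite_setIr; apply: bigcup_finite => // i _; apply: r_fin.
- by move=> j [].
have [x' x'p x'F] := Cext _ Cp F Ffin.
exists (fun j => if `[< D j >] then g j else x' j) => [j Dj|i Fi]; first by rewrite /= asboolT.
rewrite -x'F //; apply: eq_row_value => j rij.
have [Dj|nDj] := pselect (D j); last by rewrite asboolF.
have pj : p.1 j by apply: Wp; split=> //; exists i.
by rewrite asboolT // x'p // (gE p).
Qed.

Lemma extendable_max : extendable (set0, fun=> 0) ->
  exists2 p, extendable p & forall q, extendable q -> extends p q -> q.1 `<=` p.1.
Proof.
move=> ext0; have [p pext pmax] := zorn_premaximal ext0 (fun p => extends_refl _)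
  (fun p q s => @extends_trans _ _ _ _ _) extendable_chain.
by exists p => // q qext /(pmax q qext)[].
Qed.

Lemma stuck_variable : extendable (set0, fun=> 0) -> ~ (exists x, solves_on x setT) ->
  exists p j0, [/\ extendable p, ~ p.1 j0 &
    ~ exists v, forall F, finite_set F ->
        exists x, [/\ agrees x p, x j0 = v & solves_on x F]].
Proof.
move=> ext0 unsolvable; have [[D g] pext pmax] := extendable_max ext0.
have [allD|/existsNP[j0 nDj0]] := pselect (forall j, D j).
  case: unsolvable; exists g => i _.
  have [x xg xi] := pext [set i] (finite_set1 i).
  by rewrite -(xi i erefl); congr row_value; apply: funext => j; rewrite xg.
exists (D, g), j0; split=> // -[v vext].
pose g' j := if `[< j = j0 >] then v else g j.
have g'g j : D j -> g' j = g j.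
  by move=> Dj; rewrite /g' asboolF // => ej; apply: nDj0; rewrite -ej.
have ext' : extendable (D `|` [set j0], g').
  move=> F /vext[x [xg xj0 xF]]; exists x => // j [Dj|->]; last by rewrite /= /g' asboolT.
  by rewrite xg //= g'g.
have ext_g' : extends (D, g) (D `|` [set j0], g').
  by split=> [j Dj|j Dj]; [left|rewrite /= g'g].
by apply: nDj0; apply: (pmax _ ext' ext_g'); right.
Qed.

Section Translation.
Variables (D : set J) (g : J -> V) (j0 : choiced J).
Hypothesis nDj0 : ~ D j0.

Definition row_list (F : set I) : seq (choiced I) := fset_set (F : set (choiced I)).

Definition other_vars (F : set I) : set (choiced J) :=
  [set j | [/\ exists2 i, F i & r i j != 0, ~ D j & j <> j0]].

Definition free_vars (F : set I) : seq (choiced J) := j0 :: fset_set (other_vars F).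

Definition sys_of (F : set I) : linsys R :=
  [seq [seq r i j | j <- free_vars F] | i <- row_list F].

Definition rhs_of (F : set I) : nat -> V :=
  nth 0 [seq m i - \sum_(j \in (D : set (choiced J))) r i j *: g j | i <- row_list F].

Variable F : set I.
Hypothesis F_fin : finite_set F.

Let in_fset_setP (T : choiceType) (A : set T) x : finite_set A -> x \in fset_set A <-> A x.
Proof. by move=> Afin; rewrite in_fset_set // in_setE. Qed.

Let other_fin : finite_set (other_vars F).
Proof.
apply: (@sub_finite_set _ _ (\bigcup_(i in F) [set j : choiced J | r i j != 0])).
  by move=> j [[i Fi rij] _ _]; exists i.
by apply: bigcup_finite => // i _; apply: r_fin.
Qed.

Lemma mem_row_list i : i \in row_list F <-> F i.
Proof. exact: in_fset_setP. Qed.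

Lemma free_vars_uniq : uniq (free_vars F).
Proof. by rewrite /= fset_uniq andbT; apply/negP => /in_fset_setP[]. Qed.

Lemma free_varsD : [set` free_vars F] `<=` ~` D.
Proof. by move=> j; rewrite /= inE => /orP[/eqP->|/in_fset_setP[]]. Qed.

Lemma free_vars_supp i (j : choiced J) : F i -> r i j != 0 -> ~ D j -> j \in free_vars F.
Proof.
move=> Fi rij nDj; rewrite in_cons; have [//|nj] := eqVneq j j0.
by apply/orP; right; apply/in_fset_setP => //; split=> //; [exists i|move/eqP: nj].
Qed.

Lemma row_value_sys_of i x z : F i -> agrees x (D, g) ->
  (forall l, (l < size (free_vars F))%N -> z l = x (nth j0 (free_vars F) l)) ->
  row_value (r i) x = m i <->
  lin_eval [seq r i j | j <- free_vars F] z = m i - \sum_(j \in (D : set (choiced J))) r i j *: g j.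
Proof.
move=> Fi xg zx; rewrite (lin_eval_map (r i) zx).
rewrite (@row_value_split _ _ _ _ x g D (free_vars F) (r_fin i) xg free_vars_uniq
  free_varsD (fun j => free_vars_supp Fi)).
by split=> [<-|->]; rewrite addrC ?addKr ?subrK.
Qed.

Lemma sat_at_sys_of v : sat_at v (sys_of F) (rhs_of F) <->
  exists x, [/\ agrees x (D, g), x j0 = v & solves_on x F].
Proof.
split=> [[z z0 z_rows]|[x [xg xj0 xF]]].
  pose x (j : choiced J) := if `[< D j >] then g j
    else if j \in free_vars F then z (index j (free_vars F)) else 0.
  have zx l : (l < size (free_vars F))%N -> z l = x (nth j0 (free_vars F) l).
    move=> lt; have nD := free_varsD (mem_nth j0 lt).
    by rewrite /x asboolF // mem_nth // index_uniq // free_vars_uniq.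
  have xg : agrees x (D, g) by move=> j Dj; rewrite /x asboolT.
  exists x; split=> //; first by rewrite -z0 (zx 0%N).
  move=> i Fi; apply/(row_value_sys_of Fi xg zx).
  have iF : (i : choiced I) \in row_list F by apply/mem_row_list.
  have := z_rows (index (i : choiced I) (row_list F)).
  by rewrite /sys_of /rhs_of !(nth_map (i : choiced I)) ?index_mem // nth_index.
exists (fun l => x (nth j0 (free_vars F) l)) => // k.
have [kF|kF] := ltnP k (size (row_list F)); last first.
  by rewrite /sys_of /rhs_of !nth_default ?size_map // /lin_eval big_ord0.
case E : (row_list F) kF => [//|i0 s] kF; rewrite -E in kF *.
have Fi : F (nth i0 (row_list F) k) by apply/mem_row_list; apply: mem_nth.
rewrite /sys_of /rhs_of !(nth_map i0) //.
by apply/(row_value_sys_of Fi xg) => //; apply: xF.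
Qed.

End Translation.

Lemma one_var_witness : extendable (set0, fun=> 0) -> ~ (exists x, solves_on x setT) ->
  exists (S : set (linsys R)) (c : linsys R -> nat -> V),
    fin_satisfiable S c /\ ~ satisfiable S c.
Proof.
move=> ext0 unsolvable.
have [[D g] [j0 [pext nDj0 stuck]]] := stuck_variable ext0 unsolvable.
pose S := [set sys_of D j0 F | F in [set F | finite_set F]].
pose rows_of phi :=
  xget (set0 : choiced (set I)) [set F | finite_set F /\ phi = sys_of D j0 F].
have rows_ofP phi : S phi -> finite_set (rows_of phi) /\ phi = sys_of D j0 (rows_of phi).
  by move=> [F Ffin <-]; apply: (@xgetI (choiced (set I)) _
    [set F' | finite_set F' /\ sys_of D j0 F = sys_of D j0 F'] F).
have sat_at_of_solution F v : finite_set F ->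
    (exists2 x, agrees x (D, g) & x j0 = v /\ solves_on x F) ->
    sat_at v (sys_of D j0 F) (rhs_of D g F).
  by move=> Ffin [x xg [xj0 xF]]; apply/sat_at_sys_of => //; exists x.
exists S, (fun phi => rhs_of D g (rows_of phi)); split.
  move=> Psi Psi_fin PsiS.
  have U_fin : finite_set (\bigcup_(phi in Psi) rows_of phi).
    by apply: bigcup_finite => // phi /PsiS/rows_ofP[].
  have [x xg xU] := pext _ U_fin.
  exists (x j0) => phi Psi_phi; have [Ffin ephi] := rows_ofP _ (PsiS _ Psi_phi).
  rewrite {1}ephi; apply: sat_at_of_solution => //; exists x => //; split=> // i Fi.
  by apply: xU; exists phi.
move=> [v vsat]; apply: stuck; exists v => F Ffin; apply/sat_at_sys_of => //.
have [F'fin eF'] := rows_ofP (sys_of D j0 F) (ex_intro2 _ _ F Ffin erefl).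
have FF'fin : finite_set (F `|` rows_of (sys_of D j0 F)) by rewrite finite_setU.
have [x xg xFF'] := pext _ FF'fin.
(* F and rows_of (sys_of F) give the same system, with possibly different
   right-hand sides; x j0 satisfies both. *)
apply: (@sat_at_coset _ _ v (x j0) _ _ (rhs_of D g (rows_of (sys_of D j0 F)))).
- by apply: vsat; exists F.
- rewrite {1}eF'; apply: sat_at_of_solution => //; exists x => //.
  by split=> // i Fi; apply: xFF'; right.
- apply: sat_at_of_solution => //; exists x => //.
  by split=> // i Fi; apply: xFF'; left.
Qed.

End OneVariableReduction.

Lemma not_alg_compact_one_var (R : pzRingType) (V : lmodType R) :
  ~ alg_compact V -> exists (S : set (linsys R)) (c : linsys R -> nat -> V),
    fin_satisfiable S c /\ ~ satisfiable S c.
Proof.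
move=> /existsNP[I /existsNP[J /existsNP[r /existsNP[m]]]].
move=> /not_implyP[r_fin /not_implyP[fin_sol unsolvable]].
apply: (one_var_witness (m := m) r_fin) => [F /fin_sol[x xF]|[x xI]].
  by exists x => // j [].
by apply: unsolvable; exists x => i; apply: xI.
Qed.

Section ProductSystem.
Variable R : pzRingType.

(* None is the unknown shared by all the systems of S, Some (phi, l) with l > 0
   is the l-th auxiliary unknown of phi; row (phi, k) is row k of phi. *)
Definition pvar := option (linsys R * nat).

Definition var_of (phi : linsys R) (l : nat) : pvar :=
  if l == 0%N then None else Some (phi, l).

Definition prod_coef (S : set (linsys R)) (i : linsys R * nat) (j : pvar) : R :=
  if `[< S i.1 >] then
    match j with
    | None => (nth [::] i.1 i.2)`_0
    | Some (psi, l) => if (psi == i.1) && (0 < l)%N then (nth [::] i.1 i.2)`_l else 0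
    end
  else 0.

Lemma var_of_inj phi : injective (var_of phi).
Proof. by move=> k k'; rewrite /var_of; do 2 case: eqP => [->|_] //; case. Qed.

Let row_vars (i : linsys R * nat) : seq (choiced pvar) :=
  map (var_of i.1) (iota 0 (size (nth [::] i.1 i.2))).

Let prod_coef_supp S i (j : choiced pvar) : j \notin row_vars i -> prod_coef S i j = 0.
Proof.
rewrite /prod_coef; case: `[< _ >] => // nj; set l := nth [::] i.1 i.2.
case: j nj => [[psi k]|] nj; last first.
  rewrite nth_default // leqNgt; apply: contra nj => lt.
  by apply/mapP; exists 0%N; rewrite ?mem_iota.
case: ifP => // /andP[/eqP epsi k0]; rewrite nth_default // leqNgt; apply: contra nj => kl.
by apply/mapP; exists k; rewrite ?mem_iota // /var_of (negPf (lt0n_neq0 k0)) epsi.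
Qed.

Lemma prod_coef_fin S : rows_finite (prod_coef S).
Proof.
move=> i; apply: (@sub_finite_set _ _ [set` row_vars i]) => // j /= rij.
by apply: contraNT rij => /prod_coef_supp->; rewrite eqxx.
Qed.

Lemma row_value_prod_coef (V : lmodType R) S i (x : pvar -> V) :
  row_value (prod_coef S i) x =
  if `[< S i.1 >] then lin_eval (nth [::] i.1 i.2) (x \o var_of i.1) else 0.
Proof.
have vars_uniq : uniq (row_vars i) by rewrite map_inj_uniq ?iota_uniq //; apply: var_of_inj.
rewrite (row_value_seq x vars_uniq (@prod_coef_supp S i)) big_map.
rewrite /lin_eval -(big_mkord xpredT (fun k => _`_k *: (x \o var_of i.1) k)) /index_iota subn0.
rewrite /prod_coef; case: `[< _ >]; last by rewrite big1 // => k _; rewrite scale0r.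
by apply: eq_bigr => -[|k] _ //=; rewrite eqxx.
Qed.

End ProductSystem.

Section ProductOfModules.
Variables (R : pzRingType) (A : Type) (M : A -> lmodType R).

Lemma dprod_sum (X : Type) (s : seq X) (P : pred X) (F : X -> dprod M) a :
  (\sum_(k <- s | P k) F k) a = \sum_(k <- s | P k) F k a.
Proof. exact: (big_morph (fun y : dprod M => y a)). Qed.

Lemma lin_eval_dprod l (z : nat -> dprod M) a : lin_eval l z a = lin_eval l (fun k => z k a).
Proof. by rewrite /lin_eval dprod_sum. Qed.

Variables (Sa : A -> set (linsys R)) (ca : forall a, linsys R -> nat -> M a).
Hypothesis Sa_fin_sat : forall a, fin_satisfiable (Sa a) (ca a).
Hypothesis Sa_unsat : forall a, ~ satisfiable (Sa a) (ca a).

Definition prod_rhs (S : set (linsys R)) (i : linsys R * nat) : dprod M :=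
  fun a => if `[< Sa a = S /\ S i.1 >] then ca a i.1 i.2 else 0.

Lemma prod_sys_error S i (x : pvar R -> dprod M) a :
  (row_value (prod_coef S i) x - prod_rhs S i) a =
  if `[< S i.1 >] then lin_eval (nth [::] i.1 i.2) (fun l => x (var_of i.1 l) a) -
    (if `[< Sa a = S >] then ca a i.1 i.2 else 0) else 0.
Proof.
have -> : (row_value (prod_coef S i) x - prod_rhs S i) a =
    row_value (prod_coef S i) x a - prod_rhs S i a by [].
rewrite row_value_prod_coef /prod_rhs.
have [Si|nSi] := pselect (S i.1); last by rewrite !asboolF ?subr0 // => -[].
rewrite (asboolT Si); have [eS|neS] := pselect (Sa a = S).
  by rewrite !asboolT // lin_eval_dprod.
by rewrite !asboolF ?lin_eval_dprod // => -[].
Qed.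

Lemma prod_sys_fin_solvable S (F : set (linsys R * nat)) : finite_set F ->
  exists x : pvar R -> dprod M,
    forall i, F i -> forall a, (row_value (prod_coef S i) x - prod_rhs S i) a = 0.
Proof.
move=> F_fin; pose Psi := S `&` fst @` F.
have Psi_fin : finite_set Psi by apply: finite_setIr; apply: finite_image.
pose v a := xget (0 : M a) [set v | forall phi, Psi phi -> sat_at v phi (ca a phi)].
pose z a phi := xget ((fun=> 0) : choiced (nat -> M a))
  [set z | z 0%N = v a /\ forall k, lin_eval (nth [::] phi k) z = ca a phi k].
have zP a phi : Sa a = S -> Psi phi ->
    z a phi 0%N = v a /\ forall k, lin_eval (nth [::] phi k) (z a phi) = ca a phi k.
  move=> eS Psi_phi; have [|w w_sat] := @Sa_fin_sat a Psi Psi_fin; first by rewrite eS => ? [].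
  have /(_ phi Psi_phi)[z' z'0 z'_rows] : forall phi, Psi phi -> sat_at (v a) phi (ca a phi).
    exact: (@xgetI _ _ [set v | forall phi, Psi phi -> sat_at v phi (ca a phi)] w).
  exact: (@xgetI (choiced (nat -> M a)) _
    [set z | z 0%N = v a /\ forall k, lin_eval (nth [::] phi k) z = ca a phi k] z').
pose x (j : pvar R) a : M a := if `[< Sa a = S >] then
  (if j is Some (phi, l) then z a phi l else v a) else 0.
exists x => -[phi k] Fi a; rewrite prod_sys_error /=.
have [Sphi|nSphi] := pselect (S phi); last by rewrite asboolF.
rewrite asboolT //; have [eS|neS] := pselect (Sa a = S); last first.
  by rewrite asboolF // subr0 /lin_eval big1 // => l _; rewrite /x asboolF // scaler0.
have [z0 z_rows] := zP a phi eS (conj Sphi (ex_intro2 _ _ (phi, k) Fi erefl)).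
rewrite asboolT // -z_rows; apply/eqP; rewrite subr_eq0; apply/eqP; congr lin_eval.
apply: funext => l.
by rewrite /x /var_of asboolT //; case: eqP => [->|].
Qed.

Lemma prod_sys_unsolvable_at S (x : pvar R -> dprod M) a : Sa a = S ->
  exists i, (row_value (prod_coef S i) x - prod_rhs S i) a != 0.
Proof.
move=> <-; apply: contrapT => /forallNP all0; apply: (@Sa_unsat a).
exists (x None a) => phi Sphi; exists (fun l => x (var_of phi l) a) => // k.
move: (all0 (phi, k)) => /negP/negPn/eqP; rewrite prod_sys_error /=.
by rewrite !asboolT // => /subr0_eq.
Qed.

Lemma quot_alg_compact_inj : alg_compact_quot (@dsum R A M) ->
  exists f : A -> set (linsys R) * ((linsys R * nat) * nat), injective f.
Proof.
move=> quot_ac.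
have /choice[xS xS_sol] : forall S, exists x : pvar R -> dprod M,
    forall i, dsum (row_value (prod_coef S i) x - prod_rhs S i).
  move=> S; apply: quot_ac (prod_coef_fin S) _ => F /(prod_sys_fin_solvable S)[x x0].
  exists x => i Fi; apply: (@sub_finite_set _ _ set0) => // a /=.
  by rewrite x0 ?eqxx.
pose err (y : set (linsys R) * (linsys R * nat)) :=
  [set a | Sa a = y.1 /\ (row_value (prod_coef y.1 y.2) (xS y.1) - prod_rhs y.1 y.2) a != 0].
have [|a|f f_inj] := @finite_cover_inj A _ err.
- move=> [S i]; apply: sub_finite_set (xS_sol S i).
  by move=> a [].
- have [i erri] := @prod_sys_unsolvable_at (Sa a) (xS (Sa a)) a erefl.
  by exists (Sa a, i).
exists (fun a => ((f a).1.1, ((f a).1.2, (f a).2))) => a b [e1 e2 e3].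
by apply: f_inj; rewrite [f a]surjective_pairing [f b]surjective_pairing e3;
  congr pair; rewrite [(f a).1]surjective_pairing [(f b).1]surjective_pairing e1 e2.
Qed.

End ProductOfModules.

Theorem proposition5 (R : pzRingType) (A : Type) (M : A -> lmodType R) :
  card_lt [set: set R] [set: A] ->
  card_lt [set: set nat] [set: A] ->
  (forall a : A, ~ alg_compact (M a)) ->
  ~ alg_compact_quot (@dsum R A M).
Proof.
move=> [_ A_gt_setR] [_ A_gt_setN] not_ac quot_ac.
have /all_tag[Sa /all_sig[ca ca_ok]] : forall a, {S : set (linsys R) &
    {c : linsys R -> nat -> M a | fin_satisfiable S c /\ ~ satisfiable S c}}.
  by move=> a; have /cid[S /cid[c ok]] := not_alg_compact_one_var (not_ac a); exists S, c.
have [f /card_le_inj A_le] :=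
  quot_alg_compact_inj (fun a => (ca_ok a).1) (fun a => (ca_ok a).2) quot_ac.
have [R_fin|/infiniteP R_inf] := pselect (finite_set [set: R]).
  have /countable_injP[iR iR_inj] := finite_set_countable R_fin.
  apply: A_gt_setN; apply: card_le_trans A_le (card_le_set_seq_seq _ (card_lexx _)).
  by move=> x y; apply: iR_inj; apply: mem_set.
apply: A_gt_setR; apply: card_le_trans A_le (card_le_set_seq_seq (@inj_id R) R_inf).
Qed.
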